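(* Let $f=\min\{0,X,Y,X+Y\}$. Then for all $N\ge1$, $\dim(U_N)\ge N\cdot\lfloor N/2\rfloor$, and consequently the entropy $H(f)=\lim_{N\to\infty}\dim(U_N)/N^2$ satisfies $H(f)\ge 1/2$; in particular $H(f)>0$.
   Context: For a tropical polynomial $f=\min_{1\le j\le m}\{a_j+t_{j,1}X+t_{j,2}Y\}$ (here $a_j=0$ and exponents $(0,0),(1,0),(0,1),(1,1)$) and $N\ge1$, let $T_N=\{0,\dots,N-1\}^2$ and consider variables $u(k_1,k_2)$, $(k_1,k_2)\in T_N$. For each shift $(s_1,s_2)\in\mathbb{Z}^2$ with all $(t_{j,1}+s_1,t_{j,2}+s_2)\in T_N$, the linearization is $\min_j\{a_j+u(t_{j,1}+s_1,t_{j,2}+s_2)\}$, satisfied by $u$ if the minimum is attained at least twice. $U_N\subset\mathbb{R}^{N^2}$ is the set of points satisfying all these linearizations (a finite union of convex polyhedra), $\dim$ is its dimension, and the entropy is $H(f)=\lim_{N\to\infty}\dim(U_N)/N^2$. *)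

From HB Require Import structures.
From mathcomp Require Import all_boot all_order all_algebra.
From mathcomp Require Import all_classical all_reals all_analysis.
Set Implicit Arguments. Unset Strict Implicit. Unset Printing Implicit Defensive.
Import Order.TTheory GRing.Theory Num.Theory.
Local Open Scope ring_scope.
Local Open Scope classical_set_scope.

Section Tropical.
Variable R : realType.

(* A tropical polynomial min_j {a_j + t_{j,1} X + t_{j,2} Y}, as the list of
   its terms (a_j, (t_{j,1}, t_{j,2})). *)
Definition tpoly := seq (R * (int * int)).

Definition inT (N : nat) (k : int * int) : bool :=
  [&& 0 <= k.1, k.1 < N%:Z, 0 <= k.2 & k.2 < N%:Z].

Definition shift (k s : int * int) : int * int := (k.1 + s.1, k.2 + s.2).

Definition valid_shift (N : nat) (f : tpoly) (s : int * int) : bool :=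
  all (fun m => inT N (shift m.2 s)) f.

(* value of u : R^{T_N} at an integer point (only used for points of T_N) *)
Definition uval (N : nat) (u : 'I_N * 'I_N -> R) (k : int * int) : R :=
  match (insub `|k.1|%N : option 'I_N), (insub `|k.2|%N : option 'I_N) with
  | Some i, Some j => u (i, j)
  | _, _ => 0
  end.

Definition lin_term (N : nat) (f : tpoly) (u : 'I_N * 'I_N -> R)
  (s : int * int) (j : nat) : R :=
  (nth (0, (0, 0)) f j).1 + uval u (shift (nth (0, (0, 0)) f j).2 s).

Definition min_attained_twice (v : nat -> R) (m : nat) : Prop :=
  exists i j : nat, [/\ (i < m)%N, (j < m)%N, i <> j, v i = v j &
    forall l : nat, (l < m)%N -> v i <= v l].

Definition U (N : nat) (f : tpoly) : set ('I_N * 'I_N -> R) :=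
  [set u | forall s : int * int, valid_shift N f s ->
           min_attained_twice (lin_term f u s) (size f)].

Definition contains_simplex (T : finType) (S : set (T -> R)) (k : nat) : Prop :=
  exists p : 'I_k.+1 -> T -> R,
    (forall w : 'I_k.+1 -> R, (forall i, 0 <= w i) -> \sum_i w i = 1 ->
        S (fun x => \sum_i w i * p i x)) /\
    (forall c : 'I_k -> R,
        (forall x, \sum_(i < k) c i * (p (lift ord0 i) x - p ord0 x) = 0) ->
        forall i, c i = 0).

(* dimension of S (for a finite union of convex polyhedra this is the maximal
   dimension of its pieces): the largest k such that S contains a k-simplex.
   Such k is always <= #|T|. *)
Definition dimset (T : finType) (S : set (T -> R)) : nat :=
  \max_(k < #|T|.+1 | `[< contains_simplex S k >]) k.

Definition f5 : tpoly := [:: (0, (0, 0)); (0, (1, 0)); (0, (0, 1)); (0, (1, 1))].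

Definition dimU (N : nat) : nat := dimset (@U N f5).

End Tropical.

From HB Require Import structures.
From mathcomp Require Import all_boot all_order all_algebra.
From mathcomp Require Import all_classical all_reals all_analysis.
From mathcomp Require Import zify ring lra.
Import Order.TTheory GRing.Theory Num.Theory.
Import numFieldNormedType.Exports.
Local Open Scope ring_scope.
Local Open Scope classical_set_scope.

(* Idea: call u : T_N -> R a "checkerboard" point if u >= 0 and u vanishes on
   every odd column k_1.  For each shift s, the four terms of the
   linearization are u(s), u(s + e_1), u(s + e_2), u(s + e_1 + e_2); one of
   the columns s_1, s_1 + 1 is odd, so two terms vanish, and 0 is the minimum
   since all terms are >= 0.  Hence every checkerboard point lies in U_N.
   The checkerboard points contain the nonnegative orthant of the coordinate
   subspace indexed by the N * floor(N/2) points (2a, b), and a nonnegative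
   orthant in n coordinates contains an n-simplex (0 and the unit vectors). *)

Lemma double_lt_of_lt_half {a N : nat} : (a < N./2)%N -> (a.*2 < N)%N.
Proof.
rewrite -ltn_double => lt_a; rewrite -[N]odd_double_half.
exact: leq_trans lt_a (leq_addl _ _).
Qed.

Definition even_col_point {N : nat} (ab : 'I_N./2 * 'I_N) : 'I_N * 'I_N :=
  (Ordinal (double_lt_of_lt_half (ltn_ord ab.1)), ab.2).

Lemma even_col_point_inj N : injective (@even_col_point N).
Proof.
move=> [a b] [a' b'] [/double_inj aa' ->]; congr pair.
exact: val_inj.
Qed.

Section LowerBound.
Variable R : realType.

Lemma min_attained_twice_of_zeros (v : nat -> R) (m i j : nat) :
  (forall l, (l < m)%N -> 0 <= v l) ->
  (i < m)%N -> (j < m)%N -> i <> j -> v i = 0 -> v j = 0 ->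
  min_attained_twice v m.
Proof.
move=> v_ge0 im jm ij vi0 vj0; exists i, j; split=> //; first by rewrite vi0 vj0.
by move=> l lm; rewrite vi0 v_ge0.
Qed.

Lemma uval_ge0 N (u : 'I_N * 'I_N -> R) k :
  (forall x, 0 <= u x) -> 0 <= uval u k.
Proof.
move=> u_ge0; rewrite /uval.
by case: (insub `|k.1|%N) => [i|//]; case: (insub `|k.2|%N).
Qed.

(* uval only sees the absolute values of the coordinates, so a u vanishing
   on odd columns has uval u k = 0 whenever |k_1| is odd. *)
Lemma uval_odd_col N (u : 'I_N * 'I_N -> R) k :
  (forall x : 'I_N * 'I_N, odd x.1 -> u x = 0) -> odd `|k.1|%N -> uval u k = 0.
Proof.
move=> u_odd k1_odd; rewrite /uval.
case: insubP => [i _ vi|_ //]; case: insubP => [j _ _|_ //].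
by apply: u_odd; rewrite /= vi.
Qed.

Lemma checkerboard_in_U N (u : 'I_N * 'I_N -> R) :
  (forall x, 0 <= u x) -> (forall x : 'I_N * 'I_N, odd x.1 -> u x = 0) ->
  @U R N (f5 R) u.
Proof.
move=> u_ge0 u_odd [s1 s2]; rewrite /valid_shift /= /inT /shift /= add0r.
case/and5P=> /and4P[s1_ge0 _ _ _] _ _ _ _.
have terms_ge0 l : (l < 4)%N -> 0 <= lin_term (f5 R) u (s1, s2) l.
  by case: l => [|[|[|[|l]]]] // _; rewrite /lin_term /= add0r uval_ge0.
case: s1 s1_ge0 terms_ge0 => [n|//] _ terms_ge0.
have absS : `|(1 + n%:Z)%R|%N = n.+1 by rewrite addrC -PoszD addn1.
have [n_odd|n_even] := boolP (odd n).
- (* column n is odd: the terms u(n, s2) and u(n, s2 + 1) vanish *)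
  by apply: (@min_attained_twice_of_zeros _ _ 0 2);
    rewrite // /lin_term /= /shift /= add0r uval_odd_col //= add0r.
- (* column n + 1 is odd: the terms u(n+1, s2) and u(n+1, s2 + 1) vanish *)
  by apply: (@min_attained_twice_of_zeros _ _ 1 3);
    rewrite // /lin_term /= /shift /= add0r uval_odd_col //= absS /= n_even.
Qed.

(* A set of functions T -> R containing every nonnegative function supported
   on E contains a #|E|-simplex, with vertices 0 and the indicators of the
   points of E. *)
Lemma orthant_simplex (T : finType) (E : {set T}) (S : set (T -> R)) :
  (forall u : T -> R, (forall x, 0 <= u x) -> (forall x, x \notin E -> u x = 0) ->
     S u) ->
  contains_simplex S #|E|.
Proof.
move=> S_orthant.
pose p (i : 'I_#|E|.+1) (x : T) : R :=
  if unlift ord0 i is Some l then (x == enum_val l)%:R else 0.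
have p0 x : p ord0 x = 0 by rewrite /p unlift_none.
have pS l x : p (lift ord0 l) x = (x == enum_val l)%:R by rewrite /p liftK.
exists p; split.
- move=> w w_ge0 _; apply: S_orthant => [x|x xE].
    by apply: sumr_ge0 => i _; rewrite mulr_ge0 // /p; case: unlift.
  apply: big1 => i _; rewrite /p; case: unlift => [l|]; last by rewrite mulr0.
  case: eqP => [xl|_]; last by rewrite mulr0.
  by rewrite xl enum_valP in xE.
- move=> c c_indep l0; have := c_indep (enum_val l0).
  rewrite (bigD1 l0) //= big1 => [|l ll0]; first by rewrite pS p0 eqxx subr0 mulr1 addr0.
  rewrite pS p0 subr0; case: eqP => [/enum_val_inj el|]; last by rewrite mulr0.
  by rewrite el eqxx in ll0.
Qed.

Lemma dimset_ge (T : finType) (S : set (T -> R)) (k : nat) :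
  (k <= #|T|)%N -> contains_simplex S k -> (k <= dimset S)%N.
Proof.
rewrite -ltnS => kT Sk.
by apply: (@leq_bigmax_cond _ _ _ (Ordinal kT)); apply/asboolP.
Qed.

Lemma dimU_ge N : (N * N./2 <= dimU R N)%N.
Proof.
pose E := [set even_col_point ab | ab : ('I_N./2 * 'I_N)%type].
have cardE : #|E| = (N * N./2)%N.
  by rewrite card_imset ?card_prod ?card_ord 1?mulnC //; exact: even_col_point_inj.
rewrite -cardE; apply: dimset_ge; first exact: max_card.
apply: orthant_simplex => u u_ge0 u_E; apply: checkerboard_in_U => // x x_odd.
apply: u_E; apply/imsetP => -[[a b] _ xab].
by move: x_odd; rewrite xab /= odd_double.
Qed.

(* Since 2 * floor(N/2) >= N - 1, the normalized dimension satisfies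
   dim U_{N+1} / (N+1)^2 >= (1 - 1/(N+1)) / 2. *)
Lemma dimU_ratio_ge N :
  2^-1 * (1 - harmonic N) <= (dimU R N.+1)%:R / (N.+1 ^ 2)%:R :> R.
Proof.
have twice_dimU : (N.+1 * N.+1 <= 2 * dimU R N.+1 + N.+1)%N.
  have := dimU_ge N.+1; have := odd_double_half N.+1; rewrite -mul2n; nia.
rewrite /= natrX ler_pdivlMr ?exprn_gt0 //.
have -> : 2^-1 * (1 - N.+1%:R^-1) * N.+1%:R ^+ 2 = 2^-1 * (N.+1%:R * N.+1%:R - N.+1%:R) :> R.
  by field; rewrite addrC natr1 pnatr_eq0.
by move: twice_dimU; rewrite -(ler_nat R) natrD !natrM; lra.
Qed.

Lemma cvg_ratio_lower_bound :
  (fun N => 2^-1 * (1 - harmonic N) : R) @ \oo --> (2^-1 : R).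
Proof.
rewrite -[X in _ --> X]mulr1 -[X in _ * X]subr0.
exact: cvgM (cvg_cst _) (cvgB (cvg_cst _) cvg_harmonic).
Qed.

End LowerBound.

Theorem mainTheorem5 (R : realType) :
  (forall N : nat, (1 <= N)%N -> (N * N./2 <= dimU R N)%N) /\
  (forall H : R,
     (fun N : nat => (dimU R N)%:R / (N ^ 2)%:R : R) @ \oo --> H ->
     1 / 2 <= H /\ 0 < H).
Proof.
split=> [N _|H ratio_to_H]; first exact: dimU_ge.
have shifted_to_H : (fun N => (dimU R N.+1)%:R / (N.+1 ^ 2)%:R : R) @ \oo --> H.
  by move: ratio_to_H; rewrite -cvg_shiftS.
have half_le_H : 2^-1 <= H.
  apply: (ler_cvg_to (cvg_ratio_lower_bound R) shifted_to_H).
  by apply: nearW => N; exact: dimU_ratio_ge.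
by rewrite mul1r; split=> //; exact: lt_le_trans half_le_H.
Qed.
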